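(* Let $r\in[n]$ and $\mu>0$ with $n\ge\mu r$. There is a universal constant $C>0$ such that for all sufficiently large $n$ and every $\delta$ with $\sqrt{4/(n-1)}<\delta<\sqrt{\mu r/n}$, $$\log\mathcal{M}(\mathbb{K}_{r,\mu},d_{2,\infty},\delta)\le C\,\frac{r^2}{\delta^2}\log n.$$
   Context: $\mathbb{K}_{r,\mu}=\{\boldsymbol{U}\in\mathbb{R}^{n\times r}:\boldsymbol{U}^\top\boldsymbol{U}=\boldsymbol{I}_r,\ \|\boldsymbol{U}\|_{2,\infty}\le\sqrt{r\mu/n}\}$, where $\|\cdot\|_{2,\infty}$ is the maximum row Euclidean norm. $d_{2,\infty}(\boldsymbol{U}_1,\boldsymbol{U}_2)=\min_{\boldsymbol{\Gamma}\in\mathbb{O}_r}\|\boldsymbol{U}_2-\boldsymbol{U}_1\boldsymbol{\Gamma}\|_{2,\infty}$. $\mathcal{M}(\mathbb{K},\rho,\delta)$ is the $\delta$-packing number: the largest cardinality of a subset of $\mathbb{K}$ whose distinct elements are at $\rho$-distance greater than $\delta$. *)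

From HB Require Import structures.
From mathcomp Require Import all_boot all_order all_algebra.
From mathcomp Require Import all_classical all_reals.
From mathcomp Require Import exp.
Set Implicit Arguments. Unset Strict Implicit. Unset Printing Implicit Defensive.
Import Order.TTheory GRing.Theory Num.Theory.
Local Open Scope classical_set_scope.
Local Open Scope ring_scope.

Section Defs.
Variable R : realType.

Definition row_norm (n r : nat) (U : 'M[R]_(n, r)) (i : 'I_n) : R :=
  Num.sqrt (\sum_(j < r) U i j ^+ 2).

Definition norm2inf (n r : nat) (U : 'M[R]_(n, r)) : R :=
  \big[Order.max/0]_(i < n) row_norm U i.

Definition orthogonal_mx (r : nat) : set 'M[R]_r :=
  [set G | G^T *m G = 1%:M].

Definition Kset (n r : nat) (mu : R) : set 'M[R]_(n, r) :=
  [set U | U^T *m U = 1%:M /\ norm2inf U <= Num.sqrt (r%:R * mu / n%:R)].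

Definition d2inf (n r : nat) (U1 U2 : 'M[R]_(n, r)) : R :=
  inf [set norm2inf (U2 - U1 *m G) | G in @orthogonal_mx r].

Definition is_packing (T : eqType) (K : set T) (rho : T -> T -> R) (delta : R)
  (S : seq T) : Prop :=
  uniq S /\ (forall U, U \in S -> K U) /\
  (forall U V, U \in S -> V \in S -> U != V -> delta < rho U V).

End Defs.

From HB Require Import structures.
From mathcomp Require Import all_boot all_order all_algebra.
From mathcomp Require Import all_classical all_reals.
From mathcomp Require Import exp.
From mathcomp Require Import ring lra zify.
Set Implicit Arguments. Unset Strict Implicit. Unset Printing Implicit Defensive.
Import Order.TTheory GRing.Theory Num.Theory.
Local Open Scope ring_scope.

(* Encode U in a delta-packing by its "large" rows, those of squared norm
   above delta^2/4, each quantized entrywise to a grid of mesh 2/n on [-1,1].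
   Two orthonormal U, V with the same code are at d_{2,oo}-distance at most
   delta: on a large row the quantization error is at most r (2/n)^2 <= delta^2,
   and on a small row |V_i - U_i|^2 <= 2|V_i|^2 + 2|U_i|^2 <= delta^2.  The
   squared row norms of U sum to r, so there are at most K = 4r/delta^2 large
   rows, hence at most (n (n+1)^r + 1)^K <= n^(4rK) codes. *)

Section Quantization.
Variable R : realType.

Definition quantize (n : nat) (x : R) : 'I_n.+1 :=
  inord (Num.truncn ((x + 1) * n%:R / 2)).

Lemma quantize_close n (x y : R) : (0 < n)%N -> x ^+ 2 <= 1 -> y ^+ 2 <= 1 ->
  quantize n x = quantize n y -> (x - y) ^+ 2 <= 4 / n%:R ^+ 2.
Proof.
move=> n0 hx hy.
have nP : 0 < n%:R :> R by rewrite ltr0n.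
set a := (x + 1) * n%:R / 2; set b := (y + 1) * n%:R / 2.
have a0 : 0 <= a by apply: divr_ge0 => //; apply: mulr_ge0; nra.
have b0 : 0 <= b by apply: divr_ge0 => //; apply: mulr_ge0; nra.
have ta : (Num.truncn a < n.+1)%N.
  by rewrite truncn_lt_nat // ltr_pdivrMr // -natr1; nra.
have tb : (Num.truncn b < n.+1)%N.
  by rewrite truncn_lt_nat // ltr_pdivrMr // -natr1; nra.
rewrite /quantize -/a -/b => /(congr1 val) /=; rewrite !inordK // => tab.
move: (truncn_itv a0) (truncn_itv b0); rewrite tab -natr1 => /andP[h1 h2] /andP[h3 h4].
have -> : (x - y) ^+ 2 = 4 * (a - b) ^+ 2 / n%:R ^+ 2.
  by rewrite /a /b; field; rewrite pnatr_eq0 -lt0n.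
by rewrite ler_pdivrMr ?exprn_gt0 // divfK ?sqrf_eq0 ?pnatr_eq0 -?lt0n //; nra.
Qed.

End Quantization.

Section Orthonormal.
Variables (R : realType) (n r : nat).
Implicit Types U V W : 'M[R]_(n, r).

Definition row_sqnorm W (i : 'I_n) : R := \sum_(j < r) W i j ^+ 2.

Lemma col_sqnorm_orthonormal U j : U^T *m U = 1%:M -> \sum_i U i j ^+ 2 = 1.
Proof.
move=> hU; have : (U^T *m U) j j = 1 by rewrite hU mxE eqxx.
by rewrite mxE => <-; apply: eq_bigr => i _; rewrite mxE expr2.
Qed.

Lemma sqr_entry_le1 U i j : U^T *m U = 1%:M -> U i j ^+ 2 <= 1.
Proof.
move=> /(col_sqnorm_orthonormal j) <-; rewrite (bigD1 i) //= lerDl.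
by apply: sumr_ge0 => k _; apply: sqr_ge0.
Qed.

Lemma sum_row_sqnorm U : U^T *m U = 1%:M -> \sum_i row_sqnorm U i = r%:R.
Proof.
move=> hU; rewrite exchange_big /= -[in RHS](card_ord r) -sumr_const.
by apply: eq_bigr => j _; apply: col_sqnorm_orthonormal.
Qed.

Lemma card_large_rows U (d : R) : 0 < d -> U^T *m U = 1%:M ->
  (#|[pred i | (d ^+ 2 / 4 < row_sqnorm U i)%R]| <= Num.truncn (4 * r%:R / d ^+ 2))%N.
Proof.
move=> d0 hU; have d2 : 0 < d ^+ 2 by rewrite exprn_gt0.
rewrite truncn_ge_nat; last by apply: divr_ge0; [apply: mulr_ge0 | apply: ltW].
rewrite ler_pdivlMr //.
set P := [pred i | _].
have h1 : (d ^+ 2 / 4) *+ #|P| <= \sum_(i in P) row_sqnorm U i.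
  by rewrite -sumr_const; apply: ler_sum => i; rewrite inE => /ltW.
have h2 : \sum_(i in P) row_sqnorm U i <= r%:R.
  rewrite -(sum_row_sqnorm hU) [X in _ <= X](bigID (mem P)) /= lerDl.
  by apply: sumr_ge0 => i _; apply: sumr_ge0 => j _; apply: sqr_ge0.
by have := le_trans h1 h2; rewrite -mulr_natr; lra.
Qed.

Lemma norm2inf_ge0 W : 0 <= norm2inf W.
Proof.
apply: (big_ind (fun x => 0 <= x)) => // [x y hx hy|i _].
  by rewrite le_max hx.
exact: sqrtr_ge0.
Qed.

Lemma norm2inf_le W (d : R) : 0 <= d ->
  (forall i, row_sqnorm W i <= d ^+ 2) -> norm2inf W <= d.
Proof.
move=> d0 h; apply: (big_ind (fun x => x <= d)) => // [x y hx hy|i _].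
  by rewrite ge_max hx hy.
by rewrite /row_norm -(ger0_norm d0) -sqrtr_sqr ler_sqrt ?sqr_ge0 //; apply: h.
Qed.

Lemma d2inf_le_norm2inf U V : d2inf U V <= norm2inf (V - U).
Proof.
have lb : has_lbound [set norm2inf (V - U *m G) | G in @orthogonal_mx R r].
  by exists 0 => x [G _ <-]; apply: norm2inf_ge0.
apply: (ge_inf lb); exists 1%:M; last by rewrite mulmx1.
by rewrite /orthogonal_mx /= trmx1 mulmx1.
Qed.

Lemma row_sqnorm_sub_le U V (d : R) i : (0 < n)%N ->
  r%:R * (4 / n%:R ^+ 2) <= d ^+ 2 ->
  U^T *m U = 1%:M -> V^T *m V = 1%:M ->
  (d ^+ 2 / 4 < row_sqnorm U i) = (d ^+ 2 / 4 < row_sqnorm V i) ->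
  (d ^+ 2 / 4 < row_sqnorm U i -> forall j, quantize n (U i j) = quantize n (V i j)) ->
  row_sqnorm (V - U) i <= d ^+ 2.
Proof.
move=> n0 hd hU hV e hq.
have -> : row_sqnorm (V - U) i = \sum_j (V i j - U i j) ^+ 2.
  by apply: eq_bigr => j _; rewrite !mxE.
have [large|small] := boolP (d ^+ 2 / 4 < row_sqnorm U i).
  apply: le_trans hd; rewrite -[r in r%:R * _](card_ord r) mulr_natl -sumr_const.
  apply: ler_sum => j _; rewrite -sqrrN opprB.
  by apply: quantize_close => //; [exact: sqr_entry_le1 | exact: sqr_entry_le1 | exact: hq].
have small' := small; rewrite e in small'; rewrite -!leNgt in small small'.
apply: (@le_trans _ _ (\sum_j (2 * V i j ^+ 2 + 2 * U i j ^+ 2))).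
  apply: ler_sum => j _; rewrite -subr_ge0.
  have -> : 2 * V i j ^+ 2 + 2 * U i j ^+ 2 - (V i j - U i j) ^+ 2
    = (V i j + U i j) ^+ 2 by ring.
  exact: sqr_ge0.
by rewrite big_split /= -!mulr_sumr; rewrite /row_sqnorm in small small'; lra.
Qed.

End Orthonormal.

Lemma padded_nth_inj (T : eqType) (s t : seq T) (K : nat) :
  (size s <= K)%N -> (size t <= K)%N ->
  (forall j, (j < K)%N -> nth None (map Some s) j = nth None (map Some t) j) ->
  s = t.
Proof.
elim: s t K => [|x s IH] [|y t] [|K] //= hs ht h; try by move: (h 0%N isT).
move: (h 0%N isT) => [->]; congr (_ :: _).
by apply: (IH t K) => // j hj; apply: (h j.+1).
Qed.

Section Coding.
Variables (R : realType) (n r : nat) (d : R).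
Implicit Types U V W : 'M[R]_(n, r).

Definition quantized_row W i : {ffun 'I_r -> 'I_n.+1} :=
  [ffun j => quantize n (W i j)].

Definition large_row W i : bool := d ^+ 2 / 4 < row_sqnorm W i.

Definition row_codes W : seq ('I_n * {ffun 'I_r -> 'I_n.+1}) :=
  [seq (i, quantized_row W i) | i <- enum (large_row W)].

Definition packing_code (K : nat) W : {ffun 'I_K -> option ('I_n * {ffun 'I_r -> 'I_n.+1})} :=
  [ffun j : 'I_K => nth None (map Some (row_codes W)) j].

Lemma mem_row_codes W i : ((i, quantized_row W i) \in row_codes W) = large_row W i.
Proof. by rewrite mem_map ?mem_enum // => a b /(congr1 fst). Qed.

Lemma row_codes_eq_large U V i : row_codes U = row_codes V -> large_row U i ->
  large_row V i /\ quantized_row U i = quantized_row V i.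
Proof.
move=> e lU; have : (i, quantized_row U i) \in row_codes V by rewrite -e mem_row_codes.
by case/mapP => i'; rewrite mem_enum => lV [-> ->].
Qed.

Lemma size_row_codes U : 0 < d -> U^T *m U = 1%:M ->
  (size (row_codes U) <= Num.truncn (4 * r%:R / d ^+ 2))%N.
Proof. by move=> d0 hU; rewrite size_map -cardE; apply: card_large_rows. Qed.

Lemma d2inf_le_of_row_codes_eq U V : (0 < n)%N -> 0 <= d ->
  r%:R * (4 / n%:R ^+ 2) <= d ^+ 2 ->
  U^T *m U = 1%:M -> V^T *m V = 1%:M ->
  row_codes U = row_codes V -> d2inf U V <= d.
Proof.
move=> n0 d0 hd hU hV e; apply: le_trans (d2inf_le_norm2inf U V) _.
apply: norm2inf_le d0 _ => i; apply: row_sqnorm_sub_le => //.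
  by apply/idP/idP => [/(row_codes_eq_large e)|/(row_codes_eq_large (esym e))] [].
move=> /(row_codes_eq_large e) [_ /ffunP eq_q] j.
by move: (eq_q j); rewrite !ffunE.
Qed.

Lemma size_packing_le (S : seq 'M[R]_(n, r)) : (0 < n)%N -> 0 < d ->
  r%:R * (4 / n%:R ^+ 2) <= d ^+ 2 ->
  is_packing (fun U => U^T *m U = 1%:M) (@d2inf R n r) d S ->
  (size S <= (n * n.+1 ^ r).+1 ^ Num.truncn (4 * r%:R / d ^+ 2))%N.
Proof.
move=> n0 d0 hd [uS [hS sepS]].
set K := Num.truncn _.
have inj : {in S &, injective (packing_code K)}.
  move=> U V US VS eq_code; apply/eqP; apply/negPn/negP => /(sepS _ _ US VS).
  apply/negP; rewrite -leNgt.
  apply: d2inf_le_of_row_codes_eq => //; [exact: ltW | exact: hS | exact: hS |].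
  apply: padded_nth_inj; [exact: size_row_codes (hS U US) | exact: size_row_codes (hS V VS)|].
  by move=> j hj; move/ffunP: eq_code => /(_ (Ordinal hj)); rewrite !ffunE.
rewrite -(size_map (packing_code K)).
have /card_uniqP <- : uniq (map (packing_code K) S) by rewrite map_inj_in_uniq.
apply: leq_trans (max_card _) _.
by rewrite card_ffun card_option card_prod !card_ffun !card_ord.
Qed.

End Coding.

Lemma code_count_le (n r K : nat) : (2 <= n)%N -> (1 <= r)%N ->
  ((n * n.+1 ^ r).+1 ^ K <= n ^ (4 * r * K))%N.
Proof.
move=> n2 r1; rewrite expnM.
suff base : ((n * n.+1 ^ r).+1 <= n ^ (4 * r))%N.
  by elim: K => // K IH; rewrite !expnS leq_mul.
have h1 : ((n * n.+1 ^ r).+1 <= n.+1 ^ r.+1)%N.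
  by rewrite expnS; move: (expn_gt0 n.+1 r); set p := (n.+1 ^ r)%N; nia.
have h2 : (n.+1 ^ r.+1 <= (n ^ 2) ^ r.+1)%N by rewrite leq_exp2r //; nia.
have h3 : ((n ^ 2) ^ r.+1 <= n ^ (4 * r))%N by rewrite -expnM leq_pexp2l //; lia.
exact: leq_trans h1 (leq_trans h2 h3).
Qed.

Section RealBounds.
Variable R : realType.

Lemma ln_le_of_le_expn (m n k : nat) : (0 < n)%N -> (m <= n ^ k)%N ->
  ln (m%:R : R) <= k%:R * ln (n%:R : R).
Proof.
move=> n0 hm; have [->|m0] := posnP m.
  by rewrite ln0 // mulr_ge0 // ln_ge0 // ler1n.
by rewrite mulr_natl -lnXn ?ltr0n // -natrX ler_ln ?posrE ?ltr0n ?expn_gt0 ?n0 // ler_nat.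
Qed.

Lemma quantization_error_le (n r : nat) (d : R) : (2 <= n)%N -> (r <= n)%N ->
  Num.sqrt (4 / (n%:R - 1)) < d -> r%:R * (4 / n%:R ^+ 2) <= d ^+ 2.
Proof.
move=> n2 rn hd.
have nR : 2 <= n%:R :> R by rewrite (ler_nat R 2 n).
have rR : r%:R <= n%:R :> R by rewrite ler_nat.
have d0 : 0 < d := le_lt_trans (sqrtr_ge0 _) hd.
have n0 : 0 < n%:R :> R by lra.
move: hd; rewrite -[d in _ < d](ger0_norm (ltW d0)) -sqrtr_sqr ltr_sqrt ?exprn_gt0 //.
rewrite ltr_pdivrMr; last lra.
by move=> h; rewrite mulrA ler_pdivrMr ?exprn_gt0 //; nra.
Qed.

End RealBounds.

Theorem lemma16 (R : realType) :
  exists C : R, 0 < C /\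
  exists N : nat, forall (n r : nat) (mu delta : R),
    (N <= n)%N -> (1 <= r <= n)%N ->
    0 < mu -> mu * r%:R <= n%:R ->
    Num.sqrt (4 / (n%:R - 1)) < delta ->
    delta < Num.sqrt (mu * r%:R / n%:R) ->
    forall S : seq 'M[R]_(n, r),
      @is_packing R _ (@Kset R n r mu) (@d2inf R n r) delta S ->
      ln ((size S)%:R : R) <= C * (r%:R ^+ 2 / delta ^+ 2) * ln (n%:R : R).
Proof.
exists 16; split; first lra.
exists 2%N => n r mu delta n2 /andP[r1 rn] _ _ hd1 _ S [uS [hS sepS]].
have n0 : (0 < n)%N by lia.
have d0 : 0 < delta := le_lt_trans (sqrtr_ge0 _) hd1.
have hd := quantization_error_le n2 rn hd1.
have packS : is_packing (fun U => U^T *m U = 1%:M) (@d2inf R n r) delta S.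
  by split; [|split] => // U /hS [].
set K := Num.truncn (4 * r%:R / delta ^+ 2).
have sizeS := leq_trans (size_packing_le n0 d0 hd packS) (code_count_le K n2 r1).
apply: le_trans (ln_le_of_le_expn R n0 sizeS) _.
rewrite mulrC [X in _ <= X]mulrC ler_wpM2l ?ln_ge0 ?ler1n //.
have hK : K%:R <= 4 * r%:R / delta ^+ 2.
  by rewrite truncn_le; apply: divr_ge0; [apply: mulr_ge0 | apply: sqr_ge0].
rewrite !natrM; apply: le_trans (ler_wpM2l _ hK) _; first exact: mulr_ge0.
have e16 : 4 * r%:R * (4 * r%:R / delta ^+ 2) = 16 * (r%:R ^+ 2 / delta ^+ 2) :> R.
  by field; exact: lt0r_neq0.
by rewrite e16.
Qed.
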